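(* Let $\psi_\alpha$ be either a Value-at-Risk metric $\mathrm{VaR}_\alpha$ or a distortion risk measure. Let $[Z_i(\tau_i,u_i)]_{i=1}^N$ be per-agent return distributions with quantile functions $\theta_i(\tau_i,u_i,w)$, let $\bar u_i=\arg\max_{u_i}\psi_\alpha[Z_i(\tau_i,u_i)]$ and $\bar{\boldsymbol u}=(\bar u_1,\dots,\bar u_N)$, let $k_1,\dots,k_N\ge0$ be constants not depending on $\boldsymbol u$, let $\theta_r(\boldsymbol\tau,\boldsymbol u,w)\le0$ for all $\boldsymbol u,w$, and let the mask be $m_\alpha(\boldsymbol\tau,\boldsymbol u)=0$ if $\boldsymbol u=\bar{\boldsymbol u}$ and $m_\alpha(\boldsymbol\tau,\boldsymbol u)=1$ otherwise. Let $Z_{jt}(\boldsymbol\tau,\boldsymbol u)$ be a joint return distribution (e.g. represented as a Dirac mixture $\sum_{j=1}^J p_j(\boldsymbol\tau,\boldsymbol u)\delta_{\theta(\boldsymbol\tau,\boldsymbol u,w_j)}$) whose quantile function is $$\theta(\boldsymbol\tau,\boldsymbol u,w)=\sum_{i=1}^N k_i\,\theta_i(\tau_i,u_i,w)+m_\alpha(\boldsymbol\tau,\boldsymbol u)\,\theta_r(\boldsymbol\tau,\boldsymbol u,w),\qquad w\in(0,1].$$ Then $[Z_i]_{i=1}^N$ satisfy the RIGM principle for $Z_{jt}$ with risk metric $\psi_\alpha$, i.e. $\arg\max_{\boldsymbol u}\psi_\alpha[Z_{jt}(\boldsymbol\tau,\boldsymbol u)]=\bar{\boldsymbol u}$.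
   Context: There are $N$ agents; agent $i$ has observation history $\tau_i$ and finite action set $U_i$; $\boldsymbol\tau=(\tau_1,\dots,\tau_N)$, $\boldsymbol u=(u_1,\dots,u_N)$. For a real random variable $Z$ with CDF $F_Z$, its quantile function is $\theta_Z(\omega)=\inf\{z\in\mathbb{R}:\omega\le F_Z(z)\}$, $\omega\in(0,1]$. $\mathrm{VaR}_\alpha(Z)=\theta_Z(\alpha)$. A distortion risk measure with differentiable distortion function $g:[0,1]\to[0,1]$ is $\psi(Z)=\int_0^1 g'(\omega)\theta_Z(\omega)\,d\omega$ (integrals assumed finite; examples CVaR, Wang, CPW). RIGM principle: $\arg\max_{\boldsymbol u}\psi_\alpha[Z_{jt}(\boldsymbol\tau,\boldsymbol u)]=(\arg\max_{u_1}\psi_\alpha[Z_1(\tau_1,u_1)],\dots,\arg\max_{u_N}\psi_\alpha[Z_N(\tau_N,u_N)])$. Standing assumption of the paper: argmax sets are singletons (ties broken by smallest index). *)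

From HB Require Import structures.
From mathcomp Require Import all_boot all_order all_algebra.
From mathcomp Require Import all_classical all_reals all_analysis.
Set Implicit Arguments. Unset Strict Implicit. Unset Printing Implicit Defensive.
Import Order.TTheory GRing.Theory Num.Theory.
Local Open Scope classical_set_scope.
Local Open Scope ring_scope.

Definition cdf {R : realType} (P : probability R R) (z : R) : R :=
  fine (P `]-oo, z]%classic).

(* Quantile function theta_Z(w) = inf {z | w <= F_Z(z)}, meaningful for w in (0,1]. *)
Definition quantile {R : realType} (P : probability R R) (w : R) : R :=
  inf [set z | w <= cdf P z].

Definition VaR {R : realType} (alpha : R) (P : probability R R) : R :=
  quantile P alpha.

Definition distortion_fun {R : realType} (g : R -> R) : Prop :=
  [/\ g 0 = 0, g 1 = 1,
      (forall x, x \in `[0, 1] -> 0 <= g x <= 1),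
      {in `[0, 1] &, {homo g : x y / x <= y}} &
      (forall x, 0 < x < 1 -> derivable g x 1)].

Definition distortion_risk {R : realType} (g : R -> R) (P : probability R R)
  : \bar R :=
  (\int[lebesgue_measure]_(w in `]0%R, 1%R]%classic) ((derive1 g (w : R) * quantile P w)%:E))%E.

Inductive risk_metric (R : realType) :=
| RM_VaR of R
| RM_distortion of (R -> R).

Definition risk {R : realType} (rm : risk_metric R) (P : probability R R)
  : \bar R :=
  match rm with
  | RM_VaR a => (VaR a P)%:E
  | RM_distortion g => distortion_risk g P
  end.

Definition valid_rm {R : realType} (rm : risk_metric R) : Prop :=
  match rm with
  | RM_VaR a => 0 < a <= 1
  | RM_distortion g => distortion_fun g
  end.

(* "Integrals assumed finite": the distortion integral is Lebesgue integrable. *)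
Definition finite_risk {R : realType} (rm : risk_metric R) (P : probability R R)
  : Prop :=
  match rm with
  | RM_VaR _ => True
  | RM_distortion g =>
      lebesgue_measure.-integrable `]0%R, 1%R]%classic
        (fun w : R => (derive1 g w * quantile P w)%:E)
  end.

Definition is_argmax {T : Type} {R : realType} (f : T -> \bar R) (x : T) : Prop :=
  forall y, (f y <= f x)%E.

Definition rigm_mask {T : eqType} {R : realType} (ubar u : T) : R :=
  if u == ubar then 0 else 1.

From HB Require Import structures.
From mathcomp Require Import all_boot all_order all_algebra.
From mathcomp Require Import all_classical all_reals all_analysis.
Import Order.TTheory GRing.Theory Num.Theory.
Import numFieldNormedType.Exports.
Local Open Scope classical_set_scope.
Local Open Scope ring_scope.

(** Both risk metrics are monotone and positively linear functionals of the
    quantile function on (0,1]: for VaR this is evaluation at alpha, for a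
    distortion risk measure it is integration against the density g' >= 0.
    Hence the joint risk is at most sum_i k_i psi(Z_i(u_i)), which is
    maximised by the individual maximisers ubar, and at ubar the mask kills
    the nonpositive residual theta_r, so equality holds there. *)

Lemma ndecr_derive1_ge0 {R : realType} (f : R -> R) (D : set R) (x : R) :
  {in D° : set R, forall x, derivable f x 1} ->
  {in D &, {homo f : x y / x <= y}} ->
  D° x -> 0 <= derive1 f x.
Proof.
move=> df ndf Dx; apply/ler_addgt0Pl => e e0.
(* f + e id is strictly increasing, so its derivative f' + e is nonnegative. *)
pose fe := f + e *: id.
have dfe y : D° y -> derivable fe y 1.
  by move=> Dy; apply: derivableD; [apply: df; rewrite inE|apply: derivableZ].
have -> : e + derive1 f x = derive1 fe x.
  rewrite !derive1E deriveD ?deriveZ ?derive_id.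
  - by rewrite addrC [e%:A]mulr1.
  - exact: derivable_id.
  - by apply: df; rewrite inE.
  - by apply: derivableZ; exact: derivable_id.
apply: (incr_derive1_ge0 _ _ Dx).
- by move=> y; rewrite inE; apply: dfe.
- move=> y z Dy Dz yz; rewrite /fe /=.
  by apply: ler_ltD; [apply: ndf; rewrite // ltW|rewrite ltr_pM2l].
Qed.

Lemma distortion_derive1_ge0 {R : realType} (g : R -> R) (w : R) :
  distortion_fun g -> 0 < w < 1 -> 0 <= derive1 g w.
Proof.
move=> [_ _ _ ndg dg] w01.
apply: (@ndecr_derive1_ge0 _ g `[0, 1]).
- by rewrite interior_itv => y; rewrite inE /= in_itv /=; apply: dg.
- by move=> a b; rewrite !inE /=; apply: ndg.
- by rewrite interior_itv /= in_itv /=.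
Qed.

Lemma is_argmax_sum {R : realType} {I : finType} {U : I -> finType}
    (f : forall i, U i -> \bar R) {k : I -> R} {ubar : {dffun forall i, U i}} :
  (forall i, 0 <= k i) -> (forall i, is_argmax (f i) (ubar i)) ->
  is_argmax (fun u : {dffun forall i, U i} => \sum_i (k i)%:E * f i (u i))%E ubar.
Proof.
move=> k0 fmax u; apply: lee_sum => i _.
by apply: lee_wpmul2l; [rewrite lee_fin|apply: fmax].
Qed.

Section QuantileRisk.
Context {R : realType}.
Implicit Types (rm : risk_metric R) (q : R -> R).

Local Notation D := `]0%R, 1%R]%classic.

Let mD : measurable (D : set (measurableTypeR R)).
Proof. exact: measurable_itv. Qed.

Definition quantile_risk rm q : \bar R :=
  match rm with
  | RM_VaR a => (q a)%:E
  | RM_distortion g => (\int[lebesgue_measure]_(w in D) (derive1 g w * q w)%:E)%E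
  end.

Definition quantile_integrable rm q : Prop :=
  match rm with
  | RM_VaR _ => True
  | RM_distortion g =>
      lebesgue_measure.-integrable D (fun w => (derive1 g w * q w)%:E)
  end.

Lemma riskE rm (P : probability R R) : risk rm P = quantile_risk rm (quantile P).
Proof. by case: rm. Qed.

Lemma finite_riskE rm (P : probability R R) :
  finite_risk rm P = quantile_integrable rm (quantile P).
Proof. by case: rm. Qed.

Lemma eq_quantile_risk rm q1 q2 : valid_rm rm ->
  (forall w, 0 < w <= 1 -> q1 w = q2 w) -> quantile_risk rm q1 = quantile_risk rm q2.
Proof.
case: rm => [a|g] /= vrm q12; first by rewrite q12.
by apply: eq_integral => w; rewrite inE /= in_itv /= => /q12 ->.
Qed.

Lemma EFin_mulr_sum (I : finType) (c : R) (k : I -> R) (x : I -> R) :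
  (c * \sum_i k i * x i)%:E = (\sum_i (k i)%:E * (c * x i)%:E)%E.
Proof.
by rewrite mulr_sumr -sumEFin; apply: eq_bigr => i _; rewrite -EFinM mulrCA.
Qed.

Section Sum.
Variables (I : finType) (k : I -> R) (q : I -> R -> R).
Let qsum w := \sum_i k i * q i w.

Lemma quantile_integrable_sum rm :
  (forall i, quantile_integrable rm (q i)) -> quantile_integrable rm qsum.
Proof.
case: rm => [//|g] /= qint.
have : lebesgue_measure.-integrable D
    (fun w => \sum_i (k i)%:E * (derive1 g w * q i w)%:E)%E.
  by apply: integrable_sum => // i _; apply: integrableZl.
by apply: eq_integrable => // w _; rewrite EFin_mulr_sum.
Qed.

Lemma quantile_risk_sum rm :
  (forall i, quantile_integrable rm (q i)) ->
  quantile_risk rm qsum = (\sum_i (k i)%:E * quantile_risk rm (q i))%E.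
Proof.
case: rm => [a|g] /= qint.
  by rewrite -sumEFin; apply: eq_bigr => i _; rewrite EFinM.
under eq_integral do rewrite EFin_mulr_sum.
rewrite integral_sum //; last by move=> i; apply: integrableZl.
by apply: eq_bigr => i _; rewrite integralZl.
Qed.

End Sum.

Lemma quantile_risk_le rm q1 q2 :
  valid_rm rm -> quantile_integrable rm q1 -> quantile_integrable rm q2 ->
  (forall w, 0 < w <= 1 -> q1 w <= q2 w) ->
  (quantile_risk rm q1 <= quantile_risk rm q2)%E.
Proof.
case: rm => [a|g] /= vrm qint1 qint2 q12; first by rewrite lee_fin q12.
(* g' may be negative at the endpoint 1, which is a null set *)
have sub : `]0%R, 1%R[ `<=` (D : set R).
  by move=> w /=; rewrite !in_itv /= => /andP[-> /ltW].
rewrite -!integral_itv_bndo_bndc; last 2 first.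
- exact: measurable_funS mD sub (measurable_int _ qint2).
- exact: measurable_funS mD sub (measurable_int _ qint1).
apply: le_integral => //.
- exact: integrableS qint1.
- exact: integrableS qint2.
move=> w; rewrite inE /= in_itv /= => /andP[w0 w1].
by rewrite lee_fin ler_wpM2l ?distortion_derive1_ge0 ?w0 // q12 // w0 ltW.
Qed.

End QuantileRisk.

Lemma mulr_rigm_mask_le0 {T : eqType} {R : realType} (ubar u : T) (x : R) :
  x <= 0 -> rigm_mask ubar u * x <= 0.
Proof. by rewrite /rigm_mask; case: ifP => _; rewrite ?mul0r ?mul1r. Qed.

Theorem theorem6 (R : realType) (N : nat) (U : 'I_N -> finType)
  (Tau : 'I_N -> Type) (tau : forall i : 'I_N, Tau i)
  (rm : risk_metric R)
  (Z : forall i : 'I_N, Tau i -> U i -> probability R R)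
  (Zjt : (forall i : 'I_N, Tau i) -> {dffun forall i : 'I_N, U i} -> probability R R)
  (ubar : {dffun forall i : 'I_N, U i})
  (k : 'I_N -> R)
  (theta_r : {dffun forall i : 'I_N, U i} -> R -> R) :
  valid_rm rm ->
  (forall (i : 'I_N) (ui : U i), finite_risk rm (Z i (tau i) ui)) ->
  (forall u, finite_risk rm (Zjt tau u)) ->
  (forall i : 'I_N, is_argmax (fun ui : U i => risk rm (Z i (tau i) ui)) (ubar i)) ->
  (forall i : 'I_N, 0 <= k i) ->
  (forall u w, theta_r u w <= 0) ->
  (forall u w, 0 < w <= 1 ->
     quantile (Zjt tau u) w =
       \sum_(i < N) k i * quantile (Z i (tau i) (u i)) w
       + rigm_mask ubar u * theta_r u w) ->
  is_argmax (fun u => risk rm (Zjt tau u)) ubar /\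
  ((forall u1 u2, is_argmax (fun u => risk rm (Zjt tau u)) u1 ->
                  is_argmax (fun u => risk rm (Zjt tau u)) u2 -> u1 = u2) ->
   forall u, is_argmax (fun u => risk rm (Zjt tau u)) u <-> u = ubar).
Proof.
move=> vrm finZ finJ Zmax k0 theta_r_le0 qJ.
pose qsum (u : {dffun forall i, U i}) w :=
  \sum_(i < N) k i * quantile (Z i (tau i) (u i)) w.
pose S (u : {dffun forall i, U i}) :=
  (\sum_(i < N) (k i)%:E * risk rm (Z i (tau i) (u i)))%E.
have qZ_int (u : {dffun forall i, U i}) i :
    quantile_integrable rm (quantile (Z i (tau i) (u i))).
  by rewrite -finite_riskE.
have riskS u : quantile_risk rm (qsum u) = S u.
  by rewrite quantile_risk_sum //; apply: eq_bigr => i _; rewrite riskE.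
have joint_le u : (risk rm (Zjt tau u) <= S u)%E.
  rewrite riskE -riskS; apply: quantile_risk_le => //.
  - by rewrite -finite_riskE.
  - exact: quantile_integrable_sum.
  - by move=> w w01; rewrite qJ // gerDl mulr_rigm_mask_le0.
have joint_ubar : risk rm (Zjt tau ubar) = S ubar.
  rewrite riskE -riskS; apply: eq_quantile_risk => // w w01.
  by rewrite qJ // /rigm_mask eqxx mul0r addr0.
have Jmax : is_argmax (fun u => risk rm (Zjt tau u)) ubar.
  move=> u; rewrite joint_ubar (le_trans (joint_le u)) //.
  exact: (is_argmax_sum (fun i ui => risk rm (Z i (tau i) ui)) k0 Zmax u).
by split=> // Juniq u; split=> [/Juniq/(_ Jmax)|->].
Qed.
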